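(* Let $\mathfrak{S}\subset\mathbb{R}^D$ be a state space, $\mathfrak{A}$ an action space, $\mathfrak{Z}\coloneqq\mathfrak{S}\times\mathfrak{A}$, and let $\mathcal{H}$ be a reproducing kernel Hilbert space of real-valued functions on $\mathfrak{Z}$ with reproducing kernel $\kappa$ and feature map $\varphi(\mathbf{z})\coloneqq\kappa(\mathbf{z},\cdot)$. Let $\mathcal{M}$ be the set of all maps $\mu\colon\mathfrak{S}\to\mathfrak{A}$. Fix $g\in\mathcal{H}$, a discount factor $\alpha\ge 0$, an integer $N_{\mathrm{av}}\ge 1$, states $\mathbf{s}^{\mathrm{av}}_1,\ldots,\mathbf{s}^{\mathrm{av}}_{N_{\mathrm{av}}}\in\mathfrak{S}$ and functions $\psi_1,\ldots,\psi_{N_{\mathrm{av}}}\in\mathcal{H}$. Define, for every $\mu\in\mathcal{M}$ and $Q\in\mathcal{H}$, $$T_\mu(Q)\coloneqq g+\alpha\sum_{i=1}^{N_{\mathrm{av}}}Q\big(\mathbf{s}^{\mathrm{av}}_i,\mu(\mathbf{s}^{\mathrm{av}}_i)\big)\,\psi_i,\qquad T(Q)\coloneqq g+\alpha\sum_{i=1}^{N_{\mathrm{av}}}\Big(\inf_{a\in\mathfrak{A}}Q(\mathbf{s}^{\mathrm{av}}_i,a)\Big)\,\psi_i ,$$ where all the infima are assumed finite. Let $\mathbf{K}_\Psi$ be the $N_{\mathrm{av}}\times N_{\mathrm{av}}$ matrix with entries $\langle\psi_i,\psi_j\rangle_{\mathcal{H}}$, and for $\mu'\in\mathcal{M}$ let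 $\mathbf{K}^{\mathrm{av}}_{\mu'}$ be the $N_{\mathrm{av}}\times N_{\mathrm{av}}$ matrix with entries $\kappa\big((\mathbf{s}^{\mathrm{av}}_i,\mu'(\mathbf{s}^{\mathrm{av}}_i)),(\mathbf{s}^{\mathrm{av}}_j,\mu'(\mathbf{s}^{\mathrm{av}}_j))\big)$. Set $$\beta\coloneqq\alpha\Big(\|\mathbf{K}_\Psi\|_2\,\sup_{\mu'\in\mathcal{M}}\|\mathbf{K}^{\mathrm{av}}_{\mu'}\|_2\Big)^{1/2},$$ with $\|\cdot\|_2$ the spectral norm. Then for all $Q_1,Q_2\in\mathcal{H}$ and all $\mu\in\mathcal{M}$, $$\|T_\mu(Q_1)-T_\mu(Q_2)\|_{\mathcal{H}}\le\beta\|Q_1-Q_2\|_{\mathcal{H}},\qquad \|T(Q_1)-T(Q_2)\|_{\mathcal{H}}\le\beta\|Q_1-Q_2\|_{\mathcal{H}}.$$ In particular, if $\beta=1$ both maps are nonexpansive, and if $\beta<1$ both are contractions on $\mathcal{H}$.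
   Context: $Q(\mathbf{z})$ denotes evaluation of $Q\in\mathcal{H}$ at $\mathbf{z}\in\mathfrak{Z}$; by the reproducing property $Q(\mathbf{z})=\langle Q,\varphi(\mathbf{z})\rangle_{\mathcal{H}}$. *)

From HB Require Import structures.
From mathcomp Require Import all_boot all_order all_algebra.
From mathcomp Require Import all_classical all_reals.
Set Implicit Arguments. Unset Strict Implicit. Unset Printing Implicit Defensive.
Import Order.TTheory GRing.Theory Num.Theory.
Local Open Scope classical_set_scope.
Local Open Scope ring_scope.

Section Defs.
Variable R : realType.

Definition vnorm2 n (v : 'cV[R]_n) : R := Num.sqrt (\sum_(i < n) v i 0 ^+ 2).

Definition spec_norm n (M : 'M[R]_n) : R :=
  sup [set vnorm2 (M *m v) | v in [set v : 'cV[R]_n | vnorm2 v <= 1]].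

Variable H : lmodType R.

Definition is_inner_product (ip : H -> H -> R) : Prop :=
  [/\ forall x y, ip x y = ip y x,
      forall a x y z, ip (a *: x + y) z = a * ip x z + ip y z,
      forall x, 0 <= ip x x &
      forall x, ip x x = 0 -> x = 0].

Definition hnorm (ip : H -> H -> R) (x : H) : R := Num.sqrt (ip x x).

Definition ip_complete (ip : H -> H -> R) : Prop :=
  forall u : nat -> H,
    (forall e : R, 0 < e -> exists N : nat, forall m n : nat,
        (N <= m)%N -> (N <= n)%N -> hnorm ip (u m - u n) < e) ->
    exists l : H, forall e : R, 0 < e -> exists N : nat, forall n : nat,
        (N <= n)%N -> hnorm ip (u n - l) < e.

Variable Z : Type.

Definition eval (ip : H -> H -> R) (phi : Z -> H) (Q : H) (z : Z) : R := ip Q (phi z).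

Definition kern (ip : H -> H -> R) (phi : Z -> H) (z z' : Z) : R := ip (phi z) (phi z').

(* H is (isomorphic to) an RKHS of real functions on Z with feature map phi:
   a real Hilbert space whose elements are identified with the functions
   z |-> <Q, phi z> (this identification being injective). *)
Definition is_rkhs (ip : H -> H -> R) (phi : Z -> H) : Prop :=
  [/\ is_inner_product ip, ip_complete ip & injective (eval ip phi)].

End Defs.

(** The difference of the two images under [T_mu] is [alpha * sum_i d_i psi_i],
    where [d_i = <Q1 - Q2, phi z_i>] is an evaluation of [Q1 - Q2] at the
    points [z_i = (s_i, mu s_i)].  A combination [sum_i c_i h_i] has squared
    norm [c^T G c <= |G| |c|^2] with [G] the Gram matrix of the [h_i]; dually,
    testing [Q] against [W = sum_i d_i phi z_i] gives
    [|d|^2 = <Q, W> <= |Q| |W| <= |Q| sqrt |K_mu| |d|], i.e. [|d| <= sqrt |K_mu| |Q|].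
    For [T], the vector of differences of infima is approximated, up to any
    [eps > 0], by the difference vector of one policy choosing eps-minimisers,
    so it obeys the same bound. *)
From HB Require Import structures.
From mathcomp Require Import all_boot all_order all_algebra.
From mathcomp Require Import all_classical all_reals.
From mathcomp Require Import ring lra.
Import Order.TTheory GRing.Theory Num.Theory.
Set Implicit Arguments. Unset Strict Implicit. Unset Printing Implicit Defensive.
Local Open Scope classical_set_scope.
Local Open Scope ring_scope.

Section InnerProduct.
Variables (R : realType) (H : lmodType R) (ip : H -> H -> R).
Hypothesis ipP : is_inner_product ip.

Lemma ipC x y : ip x y = ip y x. Proof. by case: ipP. Qed.

Lemma ipZDl a x y z : ip (a *: x + y) z = a * ip x z + ip y z.
Proof. by case: ipP. Qed.

Lemma ipxx_ge0 x : 0 <= ip x x. Proof. by case: ipP. Qed.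

Lemma ipxx_eq0 x : ip x x = 0 -> x = 0. Proof. by case: ipP => _ _ _; apply. Qed.

Lemma ipDl x y z : ip (x + y) z = ip x z + ip y z.
Proof. by have := ipZDl 1 x y z; rewrite scale1r mul1r. Qed.

Lemma ip0l z : ip 0 z = 0.
Proof. by have := ipDl 0 0 z; rewrite addr0 => h; lra. Qed.

Lemma ipZl a x z : ip (a *: x) z = a * ip x z.
Proof. by rewrite -[a *: x]addr0 ipZDl ip0l addr0. Qed.

Lemma ipBl x y z : ip (x - y) z = ip x z - ip y z.
Proof. by rewrite -scaleN1r addrC ipZDl mulN1r addrC. Qed.

Lemma ipZr a x z : ip z (a *: x) = a * ip z x.
Proof. by rewrite ipC ipZl ipC. Qed.

Lemma ipBr x y z : ip z (x - y) = ip z x - ip z y.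
Proof. by rewrite ipC ipBl !(ipC z). Qed.

Lemma ip_suml (I : finType) (F : I -> H) z : ip (\sum_i F i) z = \sum_i ip (F i) z.
Proof.
elim/big_rec2: _ => [|i a b _ <-]; first exact: ip0l.
by rewrite ipDl.
Qed.

Lemma ip_sumr (I : finType) (F : I -> H) z : ip z (\sum_i F i) = \sum_i ip z (F i).
Proof. by rewrite ipC ip_suml; apply: eq_bigr => i _; rewrite ipC. Qed.

Lemma cauchy_schwarz x y : ip x y ^+ 2 <= ip x x * ip y y.
Proof.
have [yy0|yyN0] := eqVneq (ip y y) 0.
  by rewrite (ipxx_eq0 yy0) ipC ip0l expr0n /= ip0l mulr0.
have yy_gt0 : 0 < ip y y by rewrite lt0r yyN0 ipxx_ge0.
set t := ip x y / ip y y.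
have := ipxx_ge0 (x - t *: y).
rewrite ipBl !ipBr !ipZl !ipZr (ipC y x).
have -> : ip x x - t * ip x y - (t * ip x y - t * (t * ip y y))
    = ip x x - ip x y ^+ 2 / ip y y by rewrite /t; field.
by rewrite subr_ge0 ler_pdivrMr.
Qed.

Lemma hnorm_ge0 x : 0 <= hnorm ip x. Proof. exact: sqrtr_ge0. Qed.

Lemma hnorm_sqr x : hnorm ip x ^+ 2 = ip x x.
Proof. by rewrite sqr_sqrtr // ipxx_ge0. Qed.

Lemma ip_le_hnormM x y : ip x y <= hnorm ip x * hnorm ip y.
Proof.
have [le0|gt0] := lerP (ip x y) 0.
  by apply: le_trans le0 _; rewrite mulr_ge0 // hnorm_ge0.
rewrite -(ler_pXn2r (n := 2)) ?nnegrE ?mulr_ge0 ?hnorm_ge0 ?(ltW gt0) //.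
by rewrite exprMn !hnorm_sqr cauchy_schwarz.
Qed.

Lemma hnormZ a x : hnorm ip (a *: x) = `|a| * hnorm ip x.
Proof. by rewrite /hnorm ipZl ipZr mulrA -expr2 sqrtrM ?sqr_ge0 // sqrtr_sqr. Qed.

Lemma hnormD x y : hnorm ip (x + y) <= hnorm ip x + hnorm ip y.
Proof.
rewrite -(ler_pXn2r (n := 2)) ?nnegrE ?addr_ge0 ?hnorm_ge0 //.
rewrite sqrrD !hnorm_sqr ipDl !(ipC _ (x + y)) !ipDl (ipC y x).
have := ip_le_hnormM x y; lra.
Qed.

End InnerProduct.

Section EuclideanNorm.
Variables (R : realType) (n : nat).
Implicit Types (u v : 'cV[R]_n) (M : 'M[R]_n).

Definition vdot u v : R := \sum_i u i 0 * v i 0.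

Lemma vdot_inner_product : is_inner_product vdot.
Proof.
split.
- by move=> u v; apply: eq_bigr => i _; rewrite mulrC.
- move=> a u v w; rewrite /vdot mulr_sumr -big_split /=; apply: eq_bigr => i _.
  by rewrite !mxE; ring.
- by move=> v; apply: sumr_ge0 => i _; rewrite -expr2 sqr_ge0.
- move=> v /eqP; rewrite psumr_eq0 => [/allP v0|i _]; last by rewrite -expr2 sqr_ge0.
  apply/matrixP => i j; rewrite ord1 mxE.
  by have := v0 i (mem_index_enum i); rewrite /= -expr2 sqrf_eq0 => /eqP.
Qed.

Lemma vnorm2E v : vnorm2 v = hnorm vdot v.
Proof. by rewrite /hnorm /vdot; congr Num.sqrt; apply: eq_bigr => i _; rewrite expr2. Qed.

Lemma vnorm2_ge0 v : 0 <= vnorm2 v. Proof. exact: sqrtr_ge0. Qed.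

Lemma vnorm20 : vnorm2 (0 : 'cV[R]_n) = 0.
Proof. by rewrite /vnorm2 big1 ?sqrtr0 // => i _; rewrite mxE expr0n. Qed.

Lemma vnorm2_col_le (d u : 'I_n -> R) :
  (forall i, `|d i| <= `|u i|) -> vnorm2 (\col_i d i) <= vnorm2 (\col_i u i).
Proof.
move=> le_du; rewrite ler_sqrt; last by apply: sumr_ge0 => i _; rewrite sqr_ge0.
apply: ler_sum => i _; rewrite !mxE.
by rewrite -(real_normK (num_real (d i))) -(real_normK (num_real (u i))) ler_pXn2r ?nnegrE.
Qed.

(** A row-wise Cauchy-Schwarz bound makes [spec_norm M] a genuine supremum. *)
Lemma spec_norm_has_sup M :
  has_sup [set vnorm2 (M *m v) | v in [set v | vnorm2 v <= 1]].
Proof.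
split; first by exists (vnorm2 (M *m 0)), 0; rewrite //= vnorm20.
exists (Num.sqrt (\sum_i vdot (\col_j M i j) (\col_j M i j))).
move=> _ [v /= v_le1 <-]; rewrite ler_sqrt; last first.
  by apply: sumr_ge0 => i _; apply: ipxx_ge0 vdot_inner_product _.
apply: ler_sum => i _.
have -> : (M *m v) i 0 = vdot (\col_j M i j) v.
  by rewrite mxE; apply: eq_bigr => j _; rewrite mxE.
apply: le_trans (cauchy_schwarz vdot_inner_product _ _) _.
rewrite ler_piMr ?(ipxx_ge0 vdot_inner_product) //.
by rewrite -(hnorm_sqr vdot_inner_product) -vnorm2E expr_le1 ?vnorm2_ge0.
Qed.

Lemma spec_norm_ub M v : vnorm2 v <= 1 -> vnorm2 (M *m v) <= spec_norm M.
Proof. by move=> v_le1; apply: sup_upper_bound (spec_norm_has_sup M) _ _; exists v. Qed.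

Lemma spec_norm_ge0 M : 0 <= spec_norm M.
Proof.
by apply: le_trans (spec_norm_ub M (v := 0) _); rewrite ?vnorm2_ge0 ?vnorm20.
Qed.

Lemma vnorm2_mulmx_le M v : vnorm2 (M *m v) <= spec_norm M * vnorm2 v.
Proof.
have [v0|vN0] := eqVneq (vnorm2 v) 0.
  rewrite v0 mulr0; move: v0; rewrite vnorm2E => /eqP; rewrite sqrtr_eq0 => vv_le0.
  have -> : v = 0.
    by apply: (ipxx_eq0 vdot_inner_product); apply/eqP;
      rewrite eq_le vv_le0 (ipxx_ge0 vdot_inner_product).
  by rewrite mulmx0 vnorm20.
have v_gt0 : 0 < vnorm2 v by rewrite lt0r vN0 vnorm2_ge0.
have := spec_norm_ub M (v := (vnorm2 v)^-1 *: v).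
rewrite !vnorm2E -scalemxAr !(hnormZ vdot_inner_product) -!vnorm2E.
rewrite ger0_norm ?invr_ge0 ?(ltW v_gt0) // mulVf // lexx => /(_ isT).
by rewrite mulrC -ler_pdivlMr ?invr_gt0 // invrK.
Qed.

End EuclideanNorm.
Arguments vdot_inner_product {R n}.

Section Gram.
Variables (R : realType) (H : lmodType R) (ip : H -> H -> R).
Hypothesis ipP : is_inner_product ip.
Variables (n : nat) (h : 'I_n -> H).

Definition gram : 'M[R]_n := \matrix_(i, j) ip (h i) (h j).

Lemma ip_comb_gram (c : 'cV[R]_n) :
  ip (\sum_i c i 0 *: h i) (\sum_i c i 0 *: h i) = vdot c (gram *m c).
Proof.
rewrite (ip_suml ipP); apply: eq_bigr => i _.
rewrite (ipZl ipP) (ip_sumr ipP) mxE; congr (_ * _).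
by apply: eq_bigr => j _; rewrite (ipZr ipP) mxE mulrC.
Qed.

Lemma hnorm_comb_le (c : 'I_n -> R) :
  hnorm ip (\sum_i c i *: h i) <= Num.sqrt (spec_norm gram) * vnorm2 (\col_i c i).
Proof.
have -> : \sum_i c i *: h i = \sum_i (\col_j c j) i 0 *: h i.
  by apply: eq_bigr => i _; rewrite mxE.
rewrite -(ler_pXn2r (n := 2)) ?nnegrE ?mulr_ge0 ?sqrtr_ge0 ?hnorm_ge0 ?vnorm2_ge0 //.
rewrite (hnorm_sqr ipP) ip_comb_gram exprMn sqr_sqrtr ?spec_norm_ge0 //.
apply: le_trans (ip_le_hnormM vdot_inner_product _ _) _.
rewrite -!vnorm2E expr2 mulrCA ler_wpM2l ?vnorm2_ge0 //.
exact: vnorm2_mulmx_le.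
Qed.

(** Dual bound: test [Q] against [W = sum_i <Q, h_i> h_i]. *)
Lemma vnorm2_ip_col_le (Q : H) :
  vnorm2 (\col_i ip Q (h i)) <= Num.sqrt (spec_norm gram) * hnorm ip Q.
Proof.
set d := \col_i ip Q (h i).
have [d0|dN0] := eqVneq (vnorm2 d) 0.
  by rewrite d0 mulr_ge0 ?sqrtr_ge0 ?hnorm_ge0.
have d_gt0 : 0 < vnorm2 d by rewrite lt0r dN0 vnorm2_ge0.
have dd_ip : vnorm2 d ^+ 2 = ip Q (\sum_i ip Q (h i) *: h i).
  rewrite vnorm2E (hnorm_sqr vdot_inner_product) (ip_sumr ipP).
  by apply: eq_bigr => i _; rewrite (ipZr ipP) mxE.
have : vnorm2 d * vnorm2 d
    <= (Num.sqrt (spec_norm gram) * hnorm ip Q) * vnorm2 d.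
  rewrite -expr2 dd_ip; apply: le_trans (ip_le_hnormM ipP _ _) _.
  by rewrite [_ * hnorm ip Q]mulrC -mulrA ler_wpM2l ?hnorm_ge0 ?hnorm_comb_le.
by rewrite ler_pM2r.
Qed.

End Gram.

Lemma inf_sub_le_sub (R : realType) (A : Type) (f1 f2 : A -> R) (eps : R) :
  has_inf (range f1) -> has_inf (range f2) -> 0 < eps ->
  exists a, `|inf (range f1) - inf (range f2)| <= `|f1 a - f2 a| + eps.
Proof.
move=> inf1 inf2 eps_gt0.
wlog le21 : f1 f2 inf1 inf2 / inf (range f2) <= inf (range f1).
  move=> wlog_le; case/orP: (le_total (inf (range f2)) (inf (range f1))) => le.
    exact: wlog_le.
  have [a le_a] := wlog_le f2 f1 inf2 inf1 le.
  by exists a; rewrite distrC [X in _ <= X + _]distrC.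
have [_ [a _ <-] f2a_lt] := inf_adherent eps_gt0 inf2.
have f1a_ge : inf (range f1) <= f1 a by apply: (ge_inf inf1.2); exists a.
exists a; rewrite ger0_norm ?subr_ge0 //.
have := ler_norm (f1 a - f2 a); lra.
Qed.

(** The policy [mu] picks an [eps]-minimiser at each point; indices [i] with the
    same point [s i] must share it, hence [mu] acts on points rather than on
    indices.  [mu0] only witnesses that some policy exists. *)
Lemma vnorm2_inf_sub_le (R : realType) (n : nat) (S A : Type) (s : 'I_n -> S)
    (F1 F2 : S -> A -> R) (mu0 : S -> A) (B : R) :
  (forall i, has_inf (range (F1 (s i)))) -> (forall i, has_inf (range (F2 (s i)))) ->
  (forall mu : S -> A,
     vnorm2 (\col_i (F1 (s i) (mu (s i)) - F2 (s i) (mu (s i)))) <= B) ->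
  vnorm2 (\col_i (inf (range (F1 (s i))) - inf (range (F2 (s i))))) <= B.
Proof.
move=> inf1 inf2 policy_le; apply/ler_addgt0Pr => e e_gt0.
set ones := \col_(i < n) (1 : R).
have ones_ge0 : 0 <= vnorm2 ones by exact: vnorm2_ge0.
set eps := e / (vnorm2 ones + 1).
have eps_gt0 : 0 < eps by rewrite divr_gt0 // ltr_wpDl.
have eps_ones_le : eps * vnorm2 ones <= e.
  by rewrite /eps mulrAC ler_pdivrMr ?ltr_wpDl // ler_wpM2l ?(ltW e_gt0) ?lerDl.
have near_min_at x : exists a, forall i, s i = x ->
    `|inf (range (F1 (s i))) - inf (range (F2 (s i)))|
      <= `|F1 (s i) a - F2 (s i) a| + eps.
  have [[i0 <-]|no_i] := pselect (exists i, s i = x).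
    have [a a_le] := inf_sub_le_sub (inf1 i0) (inf2 i0) eps_gt0.
    by exists a => i ->.
  by exists (mu0 x) => i si; case: no_i; exists i.
have [mu near_min] := choice near_min_at.
set e_mu := \col_i (F1 (s i) (mu (s i)) - F2 (s i) (mu (s i))).
apply: le_trans (_ : vnorm2 (\col_i `|e_mu i 0| + eps *: ones) <= _).
  rewrite [X in _ <= vnorm2 X](_ : _ = \col_i (`|e_mu i 0| + eps)); last first.
    by apply/matrixP => i j; rewrite !mxE mulr1.
  apply: vnorm2_col_le => i.
  by rewrite !mxE [X in _ <= X]ger0_norm ?addr_ge0 ?(ltW eps_gt0) ?near_min.
rewrite vnorm2E; apply: le_trans (hnormD vdot_inner_product _ _) _.
rewrite (hnormZ vdot_inner_product) ger0_norm ?(ltW eps_gt0) // -!vnorm2E.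
apply: lerD => //; apply: le_trans (policy_le mu).
by apply: vnorm2_col_le => i; rewrite !mxE normr_id.
Qed.

Lemma sub_affine_comb (R : pzRingType) (V : lmodType R) (n : nat) (g : V) (a : R)
    (p : 'I_n -> V) (x y : 'I_n -> R) :
  g + a *: \sum_i x i *: p i - (g + a *: \sum_i y i *: p i)
    = a *: \sum_i (x i - y i) *: p i.
Proof.
rewrite opprD addrACA subrr add0r -scalerBr -sumrB.
by congr (_ *: _); apply: eq_bigr => i _; rewrite scalerBl.
Qed.

Theorem theorem1 (R : realType) (D : nat) (SS : set 'rV[R]_D) (A : Type)
  (H : lmodType R) (ip : H -> H -> R)
  (phi : ({s : 'rV[R]_D | SS s} * A)%type -> H)
  (Hrkhs : is_rkhs ip phi)
  (g : H) (alpha : R) (Halpha : 0 <= alpha)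
  (Nav : nat) (HN : (0 < Nav)%N)
  (sav : 'I_Nav -> {s : 'rV[R]_D | SS s}) (psi : 'I_Nav -> H)
  (Hinf : forall (Q : H) (i : 'I_Nav),
      has_inf (range (fun a : A => eval ip phi Q (sav i, a))))
  (Hsup : has_ubound (range (fun mu' : {s : 'rV[R]_D | SS s} -> A =>
      spec_norm (\matrix_(i < Nav, j < Nav)
        kern ip phi (sav i, mu' (sav i)) (sav j, mu' (sav j)))))) :
  let Tmu := fun (mu : {s : 'rV[R]_D | SS s} -> A) (Q : H) =>
    g + alpha *: \sum_(i < Nav) eval ip phi Q (sav i, mu (sav i)) *: psi i in
  let T := fun Q : H =>
    g + alpha *: \sum_(i < Nav)
          inf (range (fun a : A => eval ip phi Q (sav i, a))) *: psi i in
  let KPsi := \matrix_(i < Nav, j < Nav) ip (psi i) (psi j) in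
  let Kav := fun mu' : {s : 'rV[R]_D | SS s} -> A =>
    \matrix_(i < Nav, j < Nav)
      kern ip phi (sav i, mu' (sav i)) (sav j, mu' (sav j)) in
  let beta := alpha * Num.sqrt (spec_norm KPsi * sup (range (fun mu' => spec_norm (Kav mu')))) in
  forall (Q1 Q2 : H) (mu : {s : 'rV[R]_D | SS s} -> A),
    hnorm ip (Tmu mu Q1 - Tmu mu Q2) <= beta * hnorm ip (Q1 - Q2) /\
    hnorm ip (T Q1 - T Q2) <= beta * hnorm ip (Q1 - Q2).
Proof.
move=> Tmu T KPsi Kav beta Q1 Q2 mu.
have ipP : is_inner_product ip by case: Hrkhs.
set Q := Q1 - Q2; pose S := sup (range (fun mu' => spec_norm (Kav mu'))).
have betaE : beta = alpha * Num.sqrt (spec_norm KPsi * S) by [].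
have Kav_le mu' : spec_norm (Kav mu') <= S.
  by apply: sup_upper_bound; [split => //; exists (spec_norm (Kav mu)), mu | exists mu'].
have policy_le mu' :
    vnorm2 (\col_i (eval ip phi Q1 (sav i, mu' (sav i))
                    - eval ip phi Q2 (sav i, mu' (sav i))))
      <= Num.sqrt S * hnorm ip Q.
  under eq_mx do rewrite /eval -(ipBl ipP).
  apply: le_trans (vnorm2_ip_col_le ipP (fun i => phi (sav i, mu' (sav i))) Q) _.
  by rewrite ler_wpM2r ?hnorm_ge0 ?ler_wsqrtr ?Kav_le.
have image_le (d : 'I_Nav -> R) : vnorm2 (\col_i d i) <= Num.sqrt S * hnorm ip Q ->
    hnorm ip (alpha *: \sum_i d i *: psi i) <= beta * hnorm ip Q.
  move=> d_le; rewrite (hnormZ ipP) ger0_norm // betaE sqrtrM ?spec_norm_ge0 //.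
  rewrite -!mulrA ler_wpM2l //; apply: le_trans (hnorm_comb_le ipP psi d) _.
  by rewrite ler_wpM2l ?sqrtr_ge0.
split; rewrite sub_affine_comb; apply: image_le; first exact: policy_le.
exact: (vnorm2_inf_sub_le (F1 := fun x a => eval ip phi Q1 (x, a))
  (F2 := fun x a => eval ip phi Q2 (x, a)) mu (Hinf Q1) (Hinf Q2) policy_le).
Qed.
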